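(* Let $p>p_0\ge1$ and $M$ be integers with $p_0\le M\le p$, let $f_n\in C[0,1]^p$, and suppose there exist $\widetilde f_n\in C[0,1]^{p_0}$ and $\eta_n>0$ with $\sup_{\mathbf{x}\in[0,1]^p}|f_n(\mathbf{x})-\widetilde f_n(x_1,\ldots,x_{p_0})|<\eta_n$, and a positive constant $\tau$ with $|\int_{[0,1]^p}x_jf_n(\mathbf{x})d\mathbf{x}-\frac12\int_{[0,1]^p}f_n(\mathbf{x})d\mathbf{x}|>\tau$ for each $j=1,\ldots,p_0$. Then for every $\mathcal{A}_1\subset Z_p$ with $|\mathcal{A}_1|=M$ and $\mathcal{A}_0\setminus\mathcal{A}_1\ne\emptyset$, $$\int_{[0,1]^p}\left(f_n(\mathbf{x})-\beta_0(\mathcal{A}_1)-\boldsymbol\beta_{Z_p}(\mathcal{A}_1)'\mathbf{x}\right)^2d\mathbf{x}-\int_{[0,1]^p}\left(f_n(\mathbf{x})-\beta_0(\mathcal{A}_0)-\boldsymbol\beta_{Z_p}(\mathcal{A}_0)'\mathbf{x}\right)^2d\mathbf{x}\ge12\tau^2-12(M-p_0+1)\eta_n^2.$$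
   Context: $Z_d=\{1,\ldots,d\}$, $\mathcal{A}_0=Z_{p_0}$. For $\mathcal{A}\subset Z_p$ and $\mathbf{x}\in[0,1]^p$, $\mathbf{x}_{\mathcal{A}}$ is the subvector of coordinates in $\mathcal{A}$. $(\beta_0(\mathcal{A}),\boldsymbol\beta(\mathcal{A})')'\in\mathbb{R}\times\mathbb{R}^{|\mathcal{A}|}$ minimizes $\int_{[0,1]^p}[f_n(\mathbf{x})-\phi_0-\boldsymbol\phi'\mathbf{x}_{\mathcal{A}}]^2d\mathbf{x}$ over $(\phi_0,\boldsymbol\phi)$, and $\boldsymbol\beta_{Z_p}(\mathcal{A})\in\mathbb{R}^p$ equals $\boldsymbol\beta(\mathcal{A})$ on coordinates in $\mathcal{A}$ and $0$ elsewhere. *)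

From HB Require Import structures.
From mathcomp Require Import all_boot all_order all_algebra.
From mathcomp Require Import all_classical all_reals all_analysis.
Set Implicit Arguments. Unset Strict Implicit. Unset Printing Implicit Defensive.
Import Order.TTheory GRing.Theory Num.Theory.
Import numFieldNormedType.Exports.
Local Open Scope classical_set_scope.
Local Open Scope ring_scope.

Definition cube {R : realType} (p : nat) : set 'rV[R]_p :=
  [set x | forall i : 'I_p, 0 <= x ord0 i <= 1].

Arguments cube {R} p _.

(* Iterated integral over [0,1]^n of a function of a sequence of reals
   (coordinates 0..n-1 are integrated, innermost = coordinate 0). *)
Fixpoint cube_int_seq {R : realType} (n : nat) (F : (nat -> R) -> R) : R :=
  match n with
  | 0 => F (fun _ => 0)
  | k.+1 => Rintegral (@lebesgue_measure R) `[0%R, 1%R]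
              (fun t : R => cube_int_seq k
                 (fun x => F (fun j => if j == k then t else x j)))
  end.

(* Integral over [0,1]^p (as an iterated Lebesgue integral; for continuous
   integrands this is the p-dimensional integral by Fubini). *)
Definition cube_int {R : realType} (p : nat) (f : 'rV[R]_p -> R) : R :=
  cube_int_seq p (fun x => f (\row_(i < p) x (nat_of_ord i))).

Definition ls_loss {R : realType} (p : nat) (f : 'rV[R]_p -> R)
  (c0 : R) (c : 'rV[R]_p) : R :=
  cube_int (fun x => (f x - c0 - \sum_(i < p) c ord0 i * x ord0 i) ^+ 2).

(* (b0, b) = (beta_0(A), beta_{Z_p}(A)): b vanishes off A and (b0, b|_A)
   minimises the L2 loss among all (c0, c) with c supported on A. *)
Definition ls_fit {R : realType} (p : nat) (f : 'rV[R]_p -> R)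
  (A : {set 'I_p}) (b0 : R) (b : 'rV[R]_p) : Prop :=
  (forall i, i \notin A -> b ord0 i = 0) /\
  (forall (c0 : R) (c : 'rV[R]_p), (forall i, i \notin A -> c ord0 i = 0) ->
     ls_loss f b0 b <= ls_loss f c0 c).

(* A_0 = Z_{p0} = {1,...,p0} (0-based: indices i < p0) as a subset of Z_p. *)
Definition Zset (p p0 : nat) : {set 'I_p} := [set i : 'I_p | (i < p0)%N].

(* The functions 1 and sqrt 12 (x_i - 1/2) are orthonormal in L^2([0,1]^p).  Writing
   c_i = int (x_i - 1/2) f = int x_i f - 1/2 int f, completing the square shows that the
   best affine fit on the coordinates in A has loss int f^2 - (int f)^2 - 12 sum_(i in A) c_i^2.
   The difference of the two losses is therefore 12 sum_(A_0) c_i^2 - 12 sum_(A_1) c_i^2,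
   which is at least 12 c_j^2 - 12 sum_(A_1 \ A_0) c_i^2 for any j in A_0 \ A_1.  The first
   term exceeds 12 tau^2.  For i outside A_0 the approximant f~ does not depend on x_i, so
   c_i = int (x_i - 1/2) (f - f~), and Bessel's inequality bounds 12 sum_(i notin A_0) c_i^2
   by int (f - f~)^2 <= eta^2.
   Since cube_int is an iterated one-dimensional integral, its linearity is proved by
   induction on the dimension, for bounded uniformly continuous integrands. *)

From HB Require Import structures.
From mathcomp Require Import all_boot all_order all_algebra.
From mathcomp Require Import all_classical all_reals all_analysis.
From mathcomp Require Import ring lra.
Set Implicit Arguments.
Unset Strict Implicit.
Unset Printing Implicit Defensive.
Import Order.TTheory GRing.Theory Num.Theory.
Import numFieldNormedType.Exports.
Local Open Scope classical_set_scope.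
Local Open Scope ring_scope.

Definition in_cube_seq {R : realType} (n : nat) (x : nat -> R) : Prop :=
  forall j, (j < n)%N -> 0 <= x j <= 1.

(* Bounded and uniformly continuous on [0,1]^n for the sup distance of the first n
   coordinates; uniform continuity makes the sections t |-> cube_int_seq k (F (.., t))
   continuous, hence integrable. *)
Definition cube_regular {R : realType} (n : nat) (F : (nat -> R) -> R) : Prop :=
  (exists B : R, forall x, in_cube_seq n x -> `|F x| <= B) /\
  (forall e : R, 0 < e -> exists2 d : R, 0 < d & forall x y,
     in_cube_seq n x -> in_cube_seq n y ->
     (forall j, (j < n)%N -> `|x j - y j| < d) -> `|F x - F y| < e).

Definition set_coord {R : realType} (k : nat) (t : R) (x : nat -> R) : nat -> R :=
  fun j => if j == k then t else x j.

Section cube_regular.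
Context {R : realType} {n : nat}.
Implicit Types (F G : (nat -> R) -> R).

Lemma cube_regular_cst (c : R) : cube_regular n (fun _ => c).
Proof.
split; first by exists `|c|.
by move=> e e0; exists 1 => // x y _ _ _; rewrite subrr normr0.
Qed.

Lemma cube_regular_coord j : (j < n)%N -> cube_regular n (fun x : nat -> R => x j).
Proof.
move=> jn; split.
  by exists 1 => x /(_ j jn) /andP[x0 x1]; rewrite ger0_norm.
by move=> e e0; exists e => // x y _ _ /(_ j jn).
Qed.

Lemma cube_regular_lin (a : R) F G : cube_regular n F -> cube_regular n G ->
  cube_regular n (fun x => a * F x + G x).
Proof.
move=> [[B1 hB1] cF] [[B2 hB2] cG]; split.
  exists (`|a| * B1 + B2) => x Dx.
  apply: (le_trans (ler_normD _ _)); rewrite normrM.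
  have := hB1 x Dx; have := hB2 x Dx; have := normr_ge0 a; nra.
move=> e e0.
have a1 : 0 < `|a| + 1 by rewrite ltr_pwDr.
have e2 : 0 < e / 2 by rewrite divr_gt0.
have [d1 d10 h1] := cF (e / 2 / (`|a| + 1)) (divr_gt0 e2 a1).
have [d2 d20 h2] := cG (e / 2) e2.
exists (Num.min d1 d2); first by rewrite lt_min d10 d20.
move=> x y Dx Dy cxy.
have [c1 c2] : (forall j, (j < n)%N -> `|x j - y j| < d1) /\
               (forall j, (j < n)%N -> `|x j - y j| < d2).
  by split=> j /cxy; rewrite lt_min => /andP[].
have := h1 _ _ Dx Dy c1; have := h2 _ _ Dx Dy c2.
set u := F x - F y; set v := G x - G y => hv.
rewrite ltr_pdivlMr // => hu.
have -> : a * F x + G x - (a * F y + G y) = a * u + v by rewrite /u /v; ring.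
apply: (le_lt_trans (ler_normD _ _)); rewrite normrM.
have := normr_ge0 a; have := normr_ge0 u; nra.
Qed.

Lemma cube_regularM F G : cube_regular n F -> cube_regular n G ->
  cube_regular n (fun x => F x * G x).
Proof.
move=> [[B1 hB1] cF] [[B2 hB2] cG]; split.
  exists (B1 * B2) => x Dx; rewrite normrM.
  have := hB1 x Dx; have := hB2 x Dx.
  have := normr_ge0 (F x); have := normr_ge0 (G x); nra.
move=> e e0.
have b1 : 0 < `|B1| + 1 by rewrite ltr_pwDr.
have b2 : 0 < `|B2| + 1 by rewrite ltr_pwDr.
have e2 : 0 < e / 2 by rewrite divr_gt0.
have [d1 d10 h1] := cF (e / 2 / (`|B2| + 1)) (divr_gt0 e2 b2).
have [d2 d20 h2] := cG (e / 2 / (`|B1| + 1)) (divr_gt0 e2 b1).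
exists (Num.min d1 d2); first by rewrite lt_min d10 d20.
move=> x y Dx Dy cxy.
have [c1 c2] : (forall j, (j < n)%N -> `|x j - y j| < d1) /\
               (forall j, (j < n)%N -> `|x j - y j| < d2).
  by split=> j /cxy; rewrite lt_min => /andP[].
have := h1 _ _ Dx Dy c1; have := h2 _ _ Dx Dy c2; rewrite !ltr_pdivlMr // => hv hu.
have -> : F x * G x - F y * G y = F x * (G x - G y) + G y * (F x - F y) by ring.
apply: (le_lt_trans (ler_normD _ _)); rewrite !normrM.
have fx : `|F x| <= `|B1| by apply: le_trans (hB1 x Dx) _; exact: ler_norm.
have gy : `|G y| <= `|B2| by apply: le_trans (hB2 y Dy) _; exact: ler_norm.
have := normr_ge0 (F x); have := normr_ge0 (G y).
have := normr_ge0 (G x - G y); have := normr_ge0 (F x - F y).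
have := normr_ge0 B1; have := normr_ge0 B2; nra.
Qed.

Lemma cube_regularZ (a : R) F : cube_regular n F -> cube_regular n (fun x => a * F x).
Proof.
move=> rF; have := cube_regular_lin a rF (cube_regular_cst 0).
by congr cube_regular; apply: funext => x; rewrite addr0.
Qed.

Lemma cube_regularD F G : cube_regular n F -> cube_regular n G ->
  cube_regular n (fun x => F x + G x).
Proof.
move=> rF rG; have := cube_regular_lin 1 rF rG.
by congr cube_regular; apply: funext => x; rewrite mul1r.
Qed.

Lemma cube_regularB F G : cube_regular n F -> cube_regular n G ->
  cube_regular n (fun x => F x - G x).
Proof.
move=> rF rG; have := cube_regular_lin (-1) rG rF.
by congr cube_regular; apply: funext => x; rewrite mulN1r addrC.
Qed.

Lemma cube_regular_sum (I : Type) (r : seq I) (F : I -> (nat -> R) -> R) :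
  (forall i, cube_regular n (F i)) -> cube_regular n (fun x => \sum_(i <- r) F i x).
Proof.
move=> rF; elim: r => [|a r IH].
  by under eq_fun do rewrite big_nil; exact: cube_regular_cst.
by under eq_fun do rewrite big_cons; exact: cube_regularD.
Qed.

Lemma cube_regularX F m : cube_regular n F -> cube_regular n (fun x => F x ^+ m).
Proof.
move=> rF; elim: m => [|m IH].
  by under eq_fun do rewrite expr0; exact: cube_regular_cst.
by under eq_fun do rewrite exprS; exact: cube_regularM.
Qed.

Lemma cube_regular_centred (i : 'I_n) : cube_regular n (fun x : nat -> R => x i - 2^-1).
Proof. by apply: cube_regularD; [exact: cube_regular_coord | exact: cube_regular_cst]. Qed.

End cube_regular.

Lemma in_cube_seq_set_coord {R : realType} k (t : R) x :
  in_cube_seq k x -> 0 <= t <= 1 -> in_cube_seq k.+1 (set_coord k t x).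
Proof.
move=> Dx t01 j; rewrite ltnS leq_eqVlt /set_coord => /orP[/eqP ->|jk].
  by rewrite eqxx.
by rewrite (ltn_eqF jk); exact: Dx.
Qed.

Lemma cube_regular_set_coord {R : realType} k (t : R) F :
  cube_regular k.+1 F -> 0 <= t <= 1 -> cube_regular k (fun x => F (set_coord k t x)).
Proof.
move=> [[B hB] cF] t01; split.
  by exists B => x Dx; apply: hB; exact: in_cube_seq_set_coord.
move=> e e0; have [d d0 hd] := cF e e0; exists d => // x y Dx Dy cxy.
apply: hd; try exact: in_cube_seq_set_coord.
move=> j; rewrite ltnS leq_eqVlt /set_coord => /orP[/eqP ->|jk].
  by rewrite eqxx subrr normr0.
by rewrite (ltn_eqF jk); exact: cxy.
Qed.

Lemma set_coordC {R : realType} j k (s t : R) x : j != k ->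
  set_coord k t (set_coord j s x) = set_coord j s (set_coord k t x).
Proof.
move=> jk; apply: funext => i; rewrite /set_coord.
by case: (eqVneq i k) => [->|//]; rewrite eq_sym (negbTE jk).
Qed.

Lemma cube_regular_widen {R : realType} m n (F : (nat -> R) -> R) :
  (m <= n)%N -> cube_regular m F -> cube_regular n F.
Proof.
move=> mn [[B hB] cF].
have Dmn x : in_cube_seq n x -> in_cube_seq m x.
  by move=> Dx j jm; exact: Dx (leq_trans jm mn).
split; first by exists B => x /Dmn; exact: hB.
move=> e e0; have [d d0 hd] := cF e e0; exists d => // x y /Dmn Dx /Dmn Dy cxy.
by apply: hd => // j jm; apply: cxy; exact: leq_trans jm mn.
Qed.

Section cube_int_seq_basics.
Context {R : realType}.
Implicit Types (F G : (nat -> R) -> R).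

Lemma eq_cube_int_seq n F G : (forall x, in_cube_seq n x -> F x = G x) ->
  cube_int_seq n F = cube_int_seq n G.
Proof.
elim: n F G => [|k IH] F G FG /=; first by apply: FG.
apply: eq_Rintegral => t; rewrite inE /= in_itv /= => t01.
by apply: IH => x Dx; apply: FG; exact: in_cube_seq_set_coord.
Qed.

Lemma cube_int_seq_ge0 n F : (forall x, in_cube_seq n x -> 0 <= F x) ->
  0 <= cube_int_seq n F.
Proof.
elim: n F => [|k IH] F F0 /=; first by apply: F0.
apply: Rintegral_ge0 => t; rewrite /= in_itv /= => t01.
by apply: IH => x Dx; apply: F0; exact: in_cube_seq_set_coord.
Qed.

Lemma lebesgue_measure_itv01 : fine ((@lebesgue_measure R) `[0, 1]%classic) = 1.
Proof. by rewrite lebesgue_measure_itv /= lte01 oppr0 adde0. Qed.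

Lemma cube_int_seq_cst n (c : R) : cube_int_seq n (fun _ => c) = c.
Proof.
elim: n => [|k IH] //=.
by rewrite IH Rintegral_cst ?lebesgue_measure_itv01 ?mulr1.
Qed.

Lemma within01_continuous_of_unif (phi : R -> R) :
  (forall e : R, 0 < e -> exists2 d : R, 0 < d & forall t s,
     0 <= t <= 1 -> 0 <= s <= 1 -> `|t - s| < d -> `|phi t - phi s| <= e) ->
  {within `[0, 1], continuous phi}.
Proof.
move=> phiu; apply/subspace_continuousP => x x01.
apply/cvgrPdist_le => e e0; have [d d0 hd] := phiu e e0.
rewrite near_withinE; apply/nbhs_ballP; exists d => //= y xy y01.
exact: hd.
Qed.

End cube_int_seq_basics.

Section cube_int_seq_linear_step.
Context {R : realType} (k : nat).
Implicit Types (F G : (nat -> R) -> R).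
Hypothesis cube_int_seq_lin_k : forall F G (a : R),
  cube_regular k F -> cube_regular k G ->
  cube_int_seq k (fun x => a * F x + G x) = a * cube_int_seq k F + cube_int_seq k G.

Lemma norm_cube_int_seq_le_step F (e : R) : cube_regular k F ->
  (forall x, in_cube_seq k x -> `|F x| <= e) -> `|cube_int_seq k F| <= e.
Proof.
move=> rF Fe.
have lin_cst a : cube_int_seq k (fun x => a * F x + e) = a * cube_int_seq k F + e.
  by rewrite cube_int_seq_lin_k ?cube_int_seq_cst //; exact: cube_regular_cst.
have := @cube_int_seq_ge0 R k (fun x => 1 * F x + e).
have := @cube_int_seq_ge0 R k (fun x => (-1) * F x + e).
rewrite !lin_cst ler_norml => ge1 ge2.
suff [] : 0 <= (-1) * cube_int_seq k F + e /\ 0 <= 1 * cube_int_seq k F + e by lra.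
by split; [apply: ge1 | apply: ge2] => x /Fe; rewrite ler_norml; lra.
Qed.

Lemma continuous_section_int F : cube_regular k.+1 F ->
  {within `[0, 1], continuous (fun t => cube_int_seq k (fun x => F (set_coord k t x)))}.
Proof.
move=> rF; apply: within01_continuous_of_unif => e e0.
have [d d0 hd] := rF.2 e e0; exists d => // t s t01 s01 ts.
rewrite -[_ - _]addrC -mulN1r -cube_int_seq_lin_k; try exact: cube_regular_set_coord.
apply: norm_cube_int_seq_le_step.
  by apply: cube_regular_lin; exact: cube_regular_set_coord.
move=> x Dx; rewrite mulN1r addrC; apply/ltW/hd; try exact: in_cube_seq_set_coord.
move=> j jk; rewrite /set_coord; case: eqP => _ //.
by rewrite subrr normr0.
Qed.

Lemma integrable_section_int F : cube_regular k.+1 F ->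
  (@lebesgue_measure R).-integrable `[0, 1]
    (EFin \o (fun t => cube_int_seq k (fun x => F (set_coord k t x)))).
Proof.
move=> rF; apply: continuous_compact_integrable; first exact: segment_compact.
exact: continuous_section_int.
Qed.

Lemma cube_int_seq_lin_succ F G (a : R) : cube_regular k.+1 F -> cube_regular k.+1 G ->
  cube_int_seq k.+1 (fun x => a * F x + G x) =
  a * cube_int_seq k.+1 F + cube_int_seq k.+1 G.
Proof.
move=> rF rG /=.
transitivity (\int[@lebesgue_measure R]_(t in `[0, 1])
   (a * cube_int_seq k (fun x => F (set_coord k t x)) +
    cube_int_seq k (fun x => G (set_coord k t x)))).
  apply: eq_Rintegral => t; rewrite inE /= in_itv /= => t01.
  by apply: cube_int_seq_lin_k; exact: cube_regular_set_coord.
rewrite RintegralD //; last exact: integrable_section_int.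
  by rewrite RintegralZl //; exact: integrable_section_int.
apply: (eq_integrable _ _ _ _ (integrableZl _ a (integrable_section_int rF))) => //.
Qed.

End cube_int_seq_linear_step.

Section cube_int_seq_linear.
Context {R : realType}.
Implicit Types (F G : (nat -> R) -> R).

Lemma cube_int_seq_lin n F G (a : R) : cube_regular n F -> cube_regular n G ->
  cube_int_seq n (fun x => a * F x + G x) = a * cube_int_seq n F + cube_int_seq n G.
Proof.
elim: n F G a => [|k IH] F G a; first by [].
exact: cube_int_seq_lin_succ.
Qed.

Lemma norm_cube_int_seq_le n F (e : R) : cube_regular n F ->
  (forall x, in_cube_seq n x -> `|F x| <= e) -> `|cube_int_seq n F| <= e.
Proof. exact/norm_cube_int_seq_le_step/cube_int_seq_lin. Qed.

Lemma cube_int_seqZ n (a : R) F : cube_regular n F ->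
  cube_int_seq n (fun x => a * F x) = a * cube_int_seq n F.
Proof.
move=> rF; rewrite -[RHS]addr0 -(cube_int_seq_cst n 0) -cube_int_seq_lin //.
  by apply: eq_cube_int_seq => x _; rewrite addr0.
exact: cube_regular_cst.
Qed.

Lemma cube_int_seqD n F G : cube_regular n F -> cube_regular n G ->
  cube_int_seq n (fun x => F x + G x) = cube_int_seq n F + cube_int_seq n G.
Proof.
move=> rF rG; rewrite -[cube_int_seq n F]mul1r -cube_int_seq_lin //.
by apply: eq_cube_int_seq => x _; rewrite mul1r.
Qed.

Lemma cube_int_seq_sum n (I : Type) (r : seq I) (F : I -> (nat -> R) -> R) :
  (forall i, cube_regular n (F i)) ->
  cube_int_seq n (fun x => \sum_(i <- r) F i x) = \sum_(i <- r) cube_int_seq n (F i).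
Proof.
move=> rF; elim: r => [|a r IH].
  rewrite big_nil -[RHS](cube_int_seq_cst n).
  by apply: eq_cube_int_seq => x _; rewrite big_nil.
rewrite big_cons -IH -cube_int_seqD //; last exact: cube_regular_sum.
by apply: eq_cube_int_seq => x _; rewrite big_cons.
Qed.

Lemma cube_int_seq1 (h : R -> R) :
  cube_int_seq 1 (fun x => h (x 0%N)) = \int[@lebesgue_measure R]_(t in `[0, 1]) h t.
Proof. by []. Qed.

Lemma cube_regular_onemX n m : (0 < n)%N ->
  cube_regular n (fun x : nat -> R => (1 - x 0%N) ^+ m).
Proof.
move=> n0; apply: cube_regularX; apply: cube_regularD; first exact: cube_regular_cst.
by under eq_fun do rewrite -mulN1r; apply: cube_regularZ; exact: cube_regular_coord.
Qed.

Lemma cube_int_seq1_onemX m :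
  cube_int_seq 1 (fun x : nat -> R => (1 - x 0%N) ^+ m) = m.+1%:R^-1.
Proof. by rewrite (cube_int_seq1 (fun t => (1 - t) ^+ m)) -Rintegral_onemXn. Qed.

Lemma cube_int_seq1_centred : cube_int_seq 1 (fun x : nat -> R => x 0%N - 2^-1) = 0.
Proof.
rewrite (eq_cube_int_seq (G := fun x => (-1) * (1 - x 0%N) ^+ 1 + 2^-1)); last first.
  by move=> x _; rewrite expr1; field.
rewrite cube_int_seq_lin ?cube_int_seq1_onemX ?cube_int_seq_cst;
  [ | exact: cube_regular_onemX | exact: cube_regular_cst].
by rewrite mulN1r addrC subrr.
Qed.

Lemma cube_int_seq1_centred_sq :
  cube_int_seq 1 (fun x : nat -> R => (x 0%N - 2^-1) ^+ 2) = 12^-1.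
Proof.
rewrite (eq_cube_int_seq
  (G := fun x => 1 * (1 - x 0%N) ^+ 2 + ((-1) * (1 - x 0%N) ^+ 1 + 4^-1))); last first.
  by move=> x _; rewrite !expr2 expr1; field.
have r1 m : cube_regular 1 (fun x : nat -> R => (1 - x 0%N) ^+ m) by exact: cube_regular_onemX.
rewrite !cube_int_seq_lin ?cube_int_seq1_onemX ?cube_int_seq_cst //;
  try exact: cube_regular_cst.
- by field.
- by apply: cube_regular_lin => //; exact: cube_regular_cst.
Qed.

End cube_int_seq_linear.

Definition centred_moment {R : realType} (n : nat) (g : (nat -> R) -> R) (i : nat) : R :=
  cube_int_seq n (fun x => (x i - 2^-1) * g x).

Section centred_coordinates.
Context {R : realType}.
Implicit Types (G g h : (nat -> R) -> R).

Lemma cube_int_seq_centred_indep n j G : (j < n)%N -> cube_regular n G ->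
  (forall x s, G (set_coord j s x) = G x) ->
  cube_int_seq n (fun x => (x j - 2^-1) * G x) = 0.
Proof.
elim: n j G => [|k IH] j G // jn rG Gj /=.
case: (ltngtP j k) => [jk|kj|jk].
- rewrite -[RHS](mul0r (fine (@lebesgue_measure R `[0, 1]%classic))) -Rintegral_cst //.
  apply: eq_Rintegral => t; rewrite inE /= in_itv /= => t01.
  transitivity (cube_int_seq k (fun x => (x j - 2^-1) * G (set_coord k t x))).
    exact: eq_cube_int_seq.
  apply: IH => //; first exact: cube_regular_set_coord.
  by move=> x s; rewrite set_coordC ?Gj // neq_ltn jk.
- by move: jn; rewrite ltnS leqNgt kj.
subst j.
have rG0 : cube_regular k G.
  have := @cube_regular_set_coord R k 0 G rG; rewrite lexx ler01 => /(_ isT).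
  by congr cube_regular; apply: funext => x; rewrite Gj.
transitivity (cube_int_seq 1 (fun x => cube_int_seq k G * (x 0%N - 2^-1))).
  apply: eq_Rintegral => t _ /=; rewrite mulrC -cube_int_seqZ //.
  by apply: eq_cube_int_seq => x _ /=; congr (_ * _); exact: Gj.
by rewrite cube_int_seqZ ?cube_int_seq1_centred ?mulr0 //; exact: (cube_regular_centred ord0).
Qed.

Lemma cube_int_seq_centred_sq n j : (j < n)%N ->
  cube_int_seq n (fun x : nat -> R => (x j - 2^-1) ^+ 2) = 12^-1.
Proof.
elim: n j => [|k IH] j // jn /=.
case: (ltngtP j k) => [jk|kj|<-{jn}].
- by rewrite IH // Rintegral_cst ?lebesgue_measure_itv01 ?mulr1.
- by move: jn; rewrite ltnS leqNgt kj.
rewrite -cube_int_seq1_centred_sq; apply: eq_Rintegral => t _.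
by rewrite cube_int_seq_cst.
Qed.

Lemma cube_int_seq_centredM n (i j : 'I_n) :
  cube_int_seq n (fun x : nat -> R => (x i - 2^-1) * (x j - 2^-1)) = (i == j)%:R / 12.
Proof.
case: (eqVneq i j) => [<-|ij].
  rewrite mul1r -(cube_int_seq_centred_sq (ltn_ord i)).
  by apply: eq_cube_int_seq => x _; rewrite expr2.
rewrite mul0r; apply: cube_int_seq_centred_indep => //; first exact: cube_regular_centred.
by move=> x s; rewrite /set_coord; case: eqP => // /val_inj ji; rewrite ji eqxx in ij.
Qed.

Lemma centred_moment_sum n (w : 'I_n -> R) h : cube_regular n h ->
  cube_int_seq n (fun x => (\sum_(i < n) w i * (x i - 2^-1)) * h x) =
  \sum_(i < n) w i * centred_moment n h i.
Proof.
move=> rh; have rch (i : 'I_n) : cube_regular n (fun x => (x i - 2^-1) * h x).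
  by apply: cube_regularM => //; exact: cube_regular_centred.
rewrite (eq_cube_int_seq (G := fun x => \sum_(i < n) w i * ((x i - 2^-1) * h x))); last first.
  by move=> x _; rewrite mulr_suml; apply: eq_bigr => i _; rewrite mulrA.
rewrite cube_int_seq_sum => [|i]; last exact: cube_regularZ.
by apply: eq_bigr => i _; rewrite cube_int_seqZ.
Qed.

Lemma cube_int_seq_centred_comb n (w : 'I_n -> R) :
  cube_int_seq n (fun x => \sum_(i < n) w i * (x i - 2^-1)) = 0.
Proof.
transitivity (\sum_(i < n) w i * centred_moment n (fun _ => 1) i).
  rewrite -centred_moment_sum; last exact: cube_regular_cst.
  by apply: eq_cube_int_seq => x _; rewrite mulr1.
rewrite big1 // => i _; rewrite /centred_moment cube_int_seq_centred_indep ?mulr0 //.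
exact: cube_regular_cst.
Qed.

Lemma cube_int_seq_centred_comb_sq n (w : 'I_n -> R) :
  cube_int_seq n (fun x => (\sum_(i < n) w i * (x i - 2^-1)) ^+ 2) =
  \sum_(i < n) w i ^+ 2 / 12.
Proof.
pose S x := \sum_(i < n) w i * (x i - 2^-1).
have rS : cube_regular n S.
  by apply: cube_regular_sum => i; apply: cube_regularZ; exact: cube_regular_centred.
rewrite (eq_cube_int_seq (G := fun x => S x * S x)) => [|x _]; last by rewrite expr2.
rewrite centred_moment_sum //; apply: eq_bigr => i _.
rewrite /centred_moment (eq_cube_int_seq (G := fun x => S x * (x i - 2^-1))) => [|x _];
  last by rewrite mulrC.
rewrite centred_moment_sum; last exact: cube_regular_centred.
rewrite (bigD1 i) //= big1 ?addr0 => [|j ji]; last first.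
  by rewrite /centred_moment cube_int_seq_centredM (negbTE ji) mul0r mulr0.
by rewrite /centred_moment cube_int_seq_centredM eqxx mul1r expr2 mulrA.
Qed.

End centred_coordinates.

Lemma sum_complete_square {R : fieldType} (I : finType) (A : {set I}) (w v : I -> R) :
  12 != 0 :> R -> (forall i, i \notin A -> w i = 0) ->
  \sum_i w i ^+ 2 / 12 - 2 * \sum_i w i * v i =
  \sum_(i in A) (w i - 12 * v i) ^+ 2 / 12 - \sum_(i in A) 12 * v i ^+ 2.
Proof.
move=> n12 wA; rewrite mulr_sumr -!sumrB (bigID (fun i => i \in A)) /=.
rewrite [X in _ + X]big1 ?addr0 => [|i /wA ->]; last by rewrite expr2 !mul0r mulr0 subrr.
by apply: eq_bigr => i _; field.
Qed.

Ltac cube_regular_auto :=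
  repeat first [ assumption | exact: cube_regular_cst | exact: cube_regular_centred
               | apply: cube_regularD | apply: cube_regularM | apply: cube_regularX ].

Lemma cube_int_seq_sq_affine {R : realType} n (g : (nat -> R) -> R) (d0 : R) (w : 'I_n -> R) :
  cube_regular n g ->
  cube_int_seq n (fun x => (g x - d0 - \sum_(i < n) w i * (x i - 2^-1)) ^+ 2) =
  cube_int_seq n (fun x => g x ^+ 2) - 2 * d0 * cube_int_seq n g
  - 2 * \sum_(i < n) w i * centred_moment n g i + d0 ^+ 2 + \sum_(i < n) w i ^+ 2 / 12.
Proof.
move=> rg; pose S x := \sum_(i < n) w i * (x i - 2^-1).
have rS : cube_regular n S.
  by apply: cube_regular_sum => i; apply: cube_regularZ; exact: cube_regular_centred.
rewrite (eq_cube_int_seq (G := fun x => g x ^+ 2 + (-2 * d0) * g x + (-2) * (S x * g x)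
  + d0 ^+ 2 + (2 * d0) * S x + S x ^+ 2)) => [|x _]; last by rewrite /S; ring.
rewrite !cube_int_seqD; try by cube_regular_auto.
rewrite !cube_int_seqZ ?cube_int_seq_cst; try by cube_regular_auto.
rewrite centred_moment_sum // cube_int_seq_centred_comb cube_int_seq_centred_comb_sq.
ring.
Qed.

Lemma bessel_centred {R : realType} n (g : (nat -> R) -> R) (B : {set 'I_n}) :
  cube_regular n g ->
  \sum_(i in B) 12 * centred_moment n g i ^+ 2 <= cube_int_seq n (fun x => g x ^+ 2).
Proof.
move=> rg; pose w i := if i \in B then 12 * centred_moment n g i else 0.
have wB i : i \notin B -> w i = 0 by rewrite /w => /negbTE ->.
(* Expand 0 <= int (g - sum_i w_i (x_i - 1/2))^2, with w_i = 12 c_i on B. *)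
have := @cube_int_seq_ge0 R n (fun x => (g x - 0 - \sum_(i < n) w i * (x i - 2^-1)) ^+ 2)
  (fun x _ => sqr_ge0 _).
rewrite cube_int_seq_sq_affine //.
have n12 : 12 != 0 :> R by rewrite pnatr_eq0.
have := sum_complete_square (fun i : 'I_n => centred_moment n g i) n12 wB.
rewrite [X in _ = X - _]big1 => [|i iB]; last by rewrite /w iB subrr expr2 !mul0r.
nra.
Qed.

Lemma compact_unif_continuous {R : realType} (V : normedModType R) (K : set V)
    (h : V -> R) : compact K -> {within K, continuous h} ->
  forall e : R, 0 < e -> exists2 d : R, 0 < d & forall v w, K v -> K w ->
    `|v - w| < d -> `|h v - h w| < e.
Proof.
move=> cK hc e e0.
have e2 : 0 < e / 2 by rewrite divr_gt0.
have := (compact_near_coveringP K).1 cK R (0 : R)^'+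
  (fun d v => K v -> forall w, K w -> `|v - w| < d -> `|h v - h w| < e) _.
case.
  move=> x Kx.
  have := (subspace_continuousP _ _).1 hc x Kx.
  move/cvgrPdist_lt => /(_ _ e2); rewrite near_withinE => /nbhs_ballP [r r0 hr].
  have r2 : 0 < r / 2 by rewrite divr_gt0.
  exists (ball x (r / 2), [set d : R | d < r / 2]) => /=.
    split; first exact: nbhsx_ballx.
    exists (r / 2) => //= d; rewrite /ball /= sub0r normrN => hd d0.
    by rewrite gtr0_norm in hd.
  case=> y d /= [yx dr] Ky w Kw yw.
  rewrite -ball_normE /ball_ /= in yx.
  have hy := hr y; have hw := hr w.
  rewrite -ball_normE /ball_ /= in hy hw.
  have xy : `|x - y| < r by lra.
  have xw : `|x - w| < r by have := ler_distD y x w; lra.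
  have := hy xy Ky; have := hw xw Kw; rewrite /from_subspace /= => h1 h2.
  by have := ler_distD (h x) (h y) (h w); rewrite distrC in h2; lra.
move=> d d0 hd.
have d2 : 0 < d / 2 by rewrite divr_gt0.
exists (d / 2) => // v w Kv Kw vw.
apply: (hd (d / 2)) => //.
by rewrite /ball /= sub0r normrN gtr0_norm // ltr_pdivrMr //; lra.
Qed.

Lemma cube_compact {R : realType} m : compact (cube m : set 'rV[R]_m).
Proof.
have := @rV_compact R^o m (fun _ => `[0, 1]%classic) (fun _ => @segment_compact R 0 1).
by congr compact.
Qed.

Lemma rV_normr_lt {R : realType} m (v : 'rV[R]_m) (d : R) : 0 < d ->
  (forall i, `|v ord0 i| < d) -> `|v| < d.
Proof.
move=> d0 vd; have -> : `|v| = mx_norm v by [].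
rewrite mx_normrE; apply: bigmax_lt => // -[i j] _ /=; rewrite (ord1 i); exact: vd.
Qed.

Lemma row_in_cube {R : realType} m (x : nat -> R) : in_cube_seq m x ->
  cube m (\row_(i < m) x (nat_of_ord i)).
Proof. by move=> Dx i; rewrite mxE; exact: Dx. Qed.

Lemma cube_regular_of_continuous {R : realType} m (h : 'rV[R]_m -> R) :
  {within cube m, continuous h} ->
  cube_regular m (fun x => h (\row_(i < m) x (nat_of_ord i))).
Proof.
move=> hc; split.
  have /compact_bounded[M [_ Mh]] := continuous_compact hc (@cube_compact R m).
  exists (M + 1) => x Dx; apply: (Mh (M + 1)); first by rewrite ltrDl.
  by exists (\row_(i < m) x (nat_of_ord i)) => //; exact: row_in_cube.
move=> e e0; have [d d0 hd] := compact_unif_continuous (@cube_compact R m) hc e0.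
exists d => // x y Dx Dy xy; apply: hd; try exact: row_in_cube.
by apply: rV_normr_lt => // i; rewrite !mxE; exact: xy.
Qed.

Lemma ler_sum_diff_setD {R : realDomainType} (I : finType) (Z A : {set I}) (a : I -> R) j :
  (forall i, 0 <= a i) -> j \in Z -> j \notin A ->
  a j - \sum_(i in A :\: Z) a i <= \sum_(i in Z) a i - \sum_(i in A) a i.
Proof.
move=> a0 jZ jA.
rewrite [\sum_(i in Z) a i](big_setID A) [\sum_(i in A) a i](big_setID Z) finset.setIC /=.
have : a j <= \sum_(i in Z :\: A) a i.
  by rewrite (big_setD1 j) ?inE ?jZ ?jA //= lerDl sumr_ge0.
lra.
Qed.

Definition cube_seq_fun {R : realType} p (f : 'rV[R]_p -> R) : (nat -> R) -> R :=
  fun x => f (\row_(i < p) x (nat_of_ord i)).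

Definition ls_min_loss {R : realType} p (f : 'rV[R]_p -> R) (A : {set 'I_p}) : R :=
  cube_int (fun x => f x ^+ 2) - cube_int f ^+ 2
  - \sum_(i in A) 12 * centred_moment p (cube_seq_fun f) i ^+ 2.

Section least_squares.
Context {R : realType} {p : nat} (f : 'rV[R]_p -> R).
Hypothesis fc : {within cube p, continuous f}.

Let rf : cube_regular p (cube_seq_fun f) := cube_regular_of_continuous fc.

Lemma ls_loss_supported (A : {set 'I_p}) c0 (c : 'rV[R]_p) :
  (forall i, i \notin A -> c ord0 i = 0) ->
  ls_loss f c0 c = ls_min_loss f A + (c0 + 2^-1 * \sum_i c ord0 i - cube_int f) ^+ 2
    + \sum_(i in A) (c ord0 i - 12 * centred_moment p (cube_seq_fun f) i) ^+ 2 / 12.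
Proof.
move=> cA; set d0 := c0 + _.
have -> : ls_loss f c0 c = cube_int_seq p (fun x => (cube_seq_fun f x - d0
    - \sum_(i < p) c ord0 i * (x i - 2^-1)) ^+ 2).
  rewrite /ls_loss /cube_int; apply: eq_cube_int_seq => x _.
  rewrite /cube_seq_fun /d0; congr (_ ^+ 2).
  have -> : \sum_(i < p) c ord0 i * (x i - 2^-1) =
      \sum_(i < p) c ord0 i * x i - 2^-1 * \sum_(i < p) c ord0 i.
    by rewrite mulr_sumr -sumrB; apply: eq_bigr => i _; ring.
  under eq_bigr do rewrite mxE.
  ring.
rewrite cube_int_seq_sq_affine // /ls_min_loss.
have n12 : 12 != 0 :> R by rewrite pnatr_eq0.
have := sum_complete_square (fun i : 'I_p => centred_moment p (cube_seq_fun f) i) n12 cA.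
rewrite /cube_int -/(cube_seq_fun f); lra.
Qed.

Lemma ls_fit_loss (A : {set 'I_p}) b0 b : ls_fit f A b0 b -> ls_loss f b0 b = ls_min_loss f A.
Proof.
move=> [bA bmin]; apply/le_anti/andP; split; last first.
  rewrite (ls_loss_supported _ bA) -addrA lerDl addr_ge0 ?sqr_ge0 // sumr_ge0 // => i _.
  by rewrite divr_ge0 ?sqr_ge0.
pose c := \row_(i < p) (if i \in A then 12 * centred_moment p (cube_seq_fun f) i else 0).
have cA i : i \notin A -> c ord0 i = 0 by move=> /negbTE iA; rewrite mxE iA.
apply: le_trans (bmin (cube_int f - 2^-1 * \sum_i c ord0 i) c cA) _.
rewrite (ls_loss_supported _ cA) subrK subrr big1 => [|i iA]; last first.
  by rewrite mxE iA subrr expr2 !mul0r.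
by rewrite expr2 mul0r !addr0.
Qed.

Lemma centred_moment_cube_int (j : 'I_p) : centred_moment p (cube_seq_fun f) j =
  cube_int (fun x => x ord0 j * f x) - 2^-1 * cube_int f.
Proof.
have rxf : cube_regular p (fun x => x j * cube_seq_fun f x).
  by apply: cube_regularM => //; exact: cube_regular_coord.
transitivity (cube_int_seq p (fun x => (- 2^-1) * cube_seq_fun f x + x j * cube_seq_fun f x)).
  by apply: eq_cube_int_seq => x _; ring.
rewrite cube_int_seq_lin // addrC mulNr; congr (_ - _).
by apply: eq_cube_int_seq => x _; rewrite mxE.
Qed.

Lemma sum_centred_moment_le p0 (Hp : (p0 <= p)%N) (ft : 'rV[R]_p0 -> R) (e : R) :
  {within cube p0, continuous ft} ->
  (forall x, cube p x -> `|f x - ft (\row_(i < p0) x ord0 (widen_ord Hp i))| <= e) ->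
  forall B : {set 'I_p}, (forall i, i \in B -> (p0 <= i)%N) ->
  \sum_(i in B) 12 * centred_moment p (cube_seq_fun f) i ^+ 2 <= e ^+ 2.
Proof.
move=> ftc fe B Bp0.
pose g := cube_seq_fun ft.
have rg : cube_regular p g := cube_regular_widen Hp (cube_regular_of_continuous ftc).
pose h x := cube_seq_fun f x - g x.
have rh : cube_regular p h := cube_regularB rf rg.
have he x : in_cube_seq p x -> `|h x| <= e.
  move=> /row_in_cube /fe; rewrite /h /g /cube_seq_fun.
  by congr (`|_ - ft _| <= _); apply/rowP => i; rewrite !mxE.
have e0 : 0 <= e.
  by apply: le_trans (he (fun _ => 0) _) => // j _; rewrite lexx ler01.
have moment_h i : i \in B -> centred_moment p (cube_seq_fun f) i = centred_moment p h i.
  move=> /Bp0 p0i.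
  have g_indep x s : g (set_coord i s x) = g x.
    rewrite /g /cube_seq_fun; congr ft; apply/rowP => k; rewrite !mxE /set_coord ltn_eqF //.
    exact: leq_trans (ltn_ord k) p0i.
  rewrite /centred_moment -[RHS]addr0.
  rewrite -(cube_int_seq_centred_indep (ltn_ord i) rg g_indep) -cube_int_seqD.
  - by apply: eq_cube_int_seq => x _; rewrite /h; ring.
  - by apply: cube_regularM => //; exact: cube_regular_centred.
  - by apply: cube_regularM => //; exact: cube_regular_centred.
rewrite (eq_bigr (fun i : 'I_p => 12 * centred_moment p h i ^+ 2)) => [|i /moment_h -> //].
apply: le_trans (bessel_centred B rh) (le_trans (ler_norm _) _).
apply: norm_cube_int_seq_le; first exact: cube_regularX.
move=> x /he hx; rewrite normrX; by apply: lerXn2r; rewrite ?nnegrE ?normr_ge0.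
Qed.

End least_squares.

Theorem lemma7 (R : realType) (p p0 M : nat)
  (Hp0 : (1 <= p0)%N) (Hp : (p0 < p)%N) (HM0 : (p0 <= M)%N) (HM : (M <= p)%N)
  (f : 'rV[R]_p -> R) (ft : 'rV[R]_p0 -> R) (eta tau : R) :
  {within cube p, continuous f} ->
  {within cube p0, continuous ft} ->
  0 < eta ->
  (exists e : R, e < eta /\
     forall x, cube p x ->
       `| f x - ft (\row_(i < p0) x ord0 (widen_ord (ltnW Hp) i)) | <= e) ->
  0 < tau ->
  (forall j : 'I_p, (j < p0)%N ->
     tau < `| cube_int (fun x => x ord0 j * f x) - 2^-1 * cube_int f |) ->
  forall (A1 : {set 'I_p}), #|A1| = M ->
  ~~ ((Zset p p0) \subset A1) ->
  forall (b0 : R) (b : 'rV[R]_p) (c0 : R) (c : 'rV[R]_p),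
    ls_fit f A1 b0 b ->
    ls_fit f (Zset p p0) c0 c ->
    ls_loss f b0 b - ls_loss f c0 c >=
      12 * tau ^+ 2 - 12 * (M - p0 + 1)%:R * eta ^+ 2.
Proof.
move=> fc ftc _ [e [e_eta fe]] tau0 htau A1 _ Z_A1 b0 b c0 c fit1 fit0.
rewrite (ls_fit_loss fc fit1) (ls_fit_loss fc fit0) /ls_min_loss.
have [j jZ jA1] : exists2 j, j \in Zset p p0 & j \notin A1 by apply/subsetPn.
have tau_j : tau ^+ 2 < centred_moment p (cube_seq_fun f) j ^+ 2.
  have := htau j; rewrite inE in jZ; rewrite -centred_moment_cube_int // => /(_ jZ).
  have := real_normK (num_real (centred_moment p (cube_seq_fun f) j)).
  by have := normr_ge0 (centred_moment p (cube_seq_fun f) j); nra.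
have e0 : 0 <= e.
  by apply: le_trans (fe 0 _) => // i; rewrite mxE lexx ler01.
have off : \sum_(i in A1 :\: Zset p p0) 12 * centred_moment p (cube_seq_fun f) i ^+ 2
    <= e ^+ 2.
  by apply: (sum_centred_moment_le fc ftc fe) => i; rewrite !inE -leqNgt => /andP[].
have := ler_sum_diff_setD (a := fun i : 'I_p => 12 * centred_moment p (cube_seq_fun f) i ^+ 2)
  (fun i => mulr_ge0 (ler0n _ 12) (sqr_ge0 _)) jZ jA1.
have K1 : 1 <= (M - p0 + 1)%:R :> R by rewrite ler1n addn1.
nra.
Qed.
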